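(* Let $f\in\mathrm{Homeo}_+(\mathbb{R})$ satisfy $f(x+1)=f(x)+2$ for all $x$ and $f(0)=0$, and let $\theta_f$ be defined on $PL_2(\mathbb{R})$ as in the context. Then for every $h\in PL_2(\mathbb{R})$, $\theta_f(h)$ is a self-homeomorphism of $\mathbb{R}$.
   Context: $\mathbb{Q}_2$ denotes the dyadic rationals. $GA(\mathbb{Q}_2)$ is the group of affine maps $x\mapsto 2^nx+r$ ($n\in\mathbb{Z}$, $r\in\mathbb{Q}_2$); $T_r(x)=x+r$, $D(x)=2x$. There is a unique injective homomorphism $\theta_f:GA(\mathbb{Q}_2)\to\mathrm{Homeo}_+(\mathbb{R})$ with $\theta_f(T_1)=T_1$, $\theta_f(D)=f$. For $r=p/2^q\in\mathbb{Q}_2$ put $\bar r=f^{-q}(p)$ (well defined, strictly increasing). $PL_2(\mathbb{R})$ is the group of homeomorphisms $h$ of $\mathbb{R}$ that are piecewise linear with a locally finite set of break points, all in $\mathbb{Q}_2$, such that near each non-break point $h$ agrees with an element of $GA(\mathbb{Q}_2)$. For $h\in PL_2(\mathbb{R})$ choose a strictly increasing sequence $(x_n)_{n\in\mathbb{Z}}$ in $\mathbb{Q}_2$ with $x_n\to\pm\infty$ as $n\to\pm\infty$ and $\gamma_n\in GA(\mathbb{Q}_2)$ with $h=\gamma_n$ on $[x_n,x_{n+1}]$, and define $\theta_f(h)(t)=\theta_f(\gamma_n)(t)$ for $t\in[\bar x_n,\bar x_{n+1})$; this is independent of the choices. *)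

From Stdlib Require Import Reals ZArith List.
Open Scope R_scope.

Definition homeo (g : R -> R) : Prop :=
  continuity g /\
  exists g' : R -> R,
    (forall x, g' (g x) = x) /\ (forall y, g (g' y) = y) /\ continuity g'.

Definition dyadic (x : R) : Prop :=
  exists (p : Z) (q : nat), x = IZR p / 2 ^ q.

Definition ga_map (n p : Z) (q : nat) : R -> R :=
  fun x => powerRZ 2 n * x + IZR p / 2 ^ q.

Definition in_GA (g : R -> R) : Prop :=
  exists (n p : Z) (q : nat), forall x, g x = ga_map n p q x.

(* PL_2(R): homeomorphisms, locally affine (agreeing with an element of
   GA(Q_2)) off a locally finite set of dyadic break points. *)
Definition PL2 (h : R -> R) : Prop :=
  homeo h /\
  exists B : R -> Prop,
    (forall y, B y -> dyadic y) /\
    (forall M, exists l : list R, forall y, B y -> Rabs y <= M -> In y l) /\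
    (forall x, ~ B x ->
       exists g eps, in_GA g /\ 0 < eps /\
         forall y, Rabs (y - x) < eps -> h y = g y).

Definition fpowZ (f finv : R -> R) (n : Z) : R -> R :=
  match n with
  | Z0 => fun x => x
  | Zpos k => Nat.iter (Pos.to_nat k) f
  | Zneg k => Nat.iter (Pos.to_nat k) finv
  end.

(* theta_f(T_r) for r = p/2^q : f^{-q} o T_p o f^q  (= theta_f(D^{-q} T_p D^q)). *)
Definition theta_T (f finv : R -> R) (p : Z) (q : nat) : R -> R :=
  fun t => Nat.iter q finv (Nat.iter q f t + IZR p).

(* theta_f of x |-> 2^n x + p/2^q  = theta_f(T_{p/2^q}) o theta_f(D^n). *)
Definition theta_GA (f finv : R -> R) (n p : Z) (q : nat) : R -> R :=
  fun t => theta_T f finv p q (fpowZ f finv n t).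

Definition rbar (finv : R -> R) (p : Z) (q : nat) : R :=
  Nat.iter q finv (IZR p).

From Stdlib Require Import Reals ZArith List Lra Lia ClassicalEpsilon.
Open Scope R_scope.

(* The map r |-> bar r extends to a strictly increasing map [dbar] on Q_2 which
   conjugates the affine action of GA(Q_2) on Q_2 to theta_f:
   theta_f(gamma)(bar r) = bar (gamma r).  Hence on [bar x_n, bar x_{n+1})
   theta_f(h) is a strictly increasing bijection of R sending the endpoints to
   bar h(x_n) and bar h(x_{n+1}); these pieces glue to a strictly increasing map
   whose image is all of R, and a strictly increasing surjection of R is a
   homeomorphism. *)

Definition increasing_bijection (g : R -> R) : Prop :=
  strict_increasing g /\ forall y, exists x, g x = y.

Definition increasing_seq (a : Z -> R) : Prop := forall n, a n < a (n + 1)%Z.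

Definition unbounded_seq (a : Z -> R) : Prop :=
  (forall M, exists n, M < a n) /\ (forall M, exists n, a n < M).

Lemma strict_increasing_le g x y : strict_increasing g -> x <= y -> g x <= g y.
Proof. intros Hg [Hxy | ->]; [left; auto | right; reflexivity]. Qed.

Lemma strict_increasing_lt_rev g x y : strict_increasing g -> g x < g y -> x < y.
Proof.
  intros Hg H. destruct (Rlt_or_le x y) as [| Hyx]; auto.
  apply (strict_increasing_le g) in Hyx; auto. lra.
Qed.

Lemma increasing_bijection_id : increasing_bijection (fun x => x).
Proof. split; [intros x y; auto | intro y; exists y; reflexivity]. Qed.

Lemma increasing_bijection_translate c : increasing_bijection (fun x => x + c).
Proof. split; [intros x y H; lra | intro y; exists (y - c); ring]. Qed.

Lemma increasing_bijection_comp g1 g2 :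
  increasing_bijection g1 -> increasing_bijection g2 ->
  increasing_bijection (fun x => g1 (g2 x)).
Proof.
  intros [Hm1 Hs1] [Hm2 Hs2]. split; [intros x y H; auto |].
  intro y. destruct (Hs1 y) as [z <-]. destruct (Hs2 z) as [x <-]. now exists x.
Qed.

Lemma increasing_bijection_iter g n :
  increasing_bijection g -> increasing_bijection (Nat.iter n g).
Proof.
  intro Hg. induction n as [| n IH]; simpl.
  - exact increasing_bijection_id.
  - exact (increasing_bijection_comp g _ Hg IH).
Qed.

Lemma increasing_bijection_continuous g : increasing_bijection g -> continuity g.
Proof.
  intros [Hm Hs] x eps Heps.
  destruct (Hs (g x - eps)) as [a Ha]. destruct (Hs (g x + eps)) as [b Hb].
  assert (a < x) by (apply (strict_increasing_lt_rev g); auto; lra).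
  assert (x < b) by (apply (strict_increasing_lt_rev g); auto; lra).
  exists (Rmin (x - a) (b - x)). split; [apply Rmin_pos; lra |].
  intros z [_ Hz]. simpl in *. unfold R_dist in *. apply Rabs_def2 in Hz.
  pose proof (Rmin_l (x - a) (b - x)). pose proof (Rmin_r (x - a) (b - x)).
  assert (g a < g z) by (apply Hm; lra). assert (g z < g b) by (apply Hm; lra).
  apply Rabs_def1; lra.
Qed.

Lemma increasing_bijection_homeo g : increasing_bijection g -> homeo g.
Proof.
  intros Hg. split; [now apply increasing_bijection_continuous |].
  destruct Hg as [Hm Hs].
  set (g' := fun y => proj1_sig (constructive_indefinite_description _ (Hs y))).
  assert (g_g' : forall y, g (g' y) = y)
    by (intro y; exact (proj2_sig (constructive_indefinite_description _ (Hs y)))).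
  assert (g'_g : forall x, g' (g x) = x).
  { intro x. destruct (Rtotal_order (g' (g x)) x) as [L | [E | L]]; auto;
      apply Hm in L; rewrite g_g' in L; lra. }
  exists g'. repeat split; auto.
  apply increasing_bijection_continuous. split.
  - intros u v L. apply (strict_increasing_lt_rev g); auto. now rewrite !g_g'.
  - intro x. exists (g x). apply g'_g.
Qed.

Lemma increasing_seq_lt a n m : increasing_seq a -> (n < m)%Z -> a n < a m.
Proof.
  intros Ha Hnm. replace m with (n + Z.of_nat (S (Z.to_nat (m - n - 1))))%Z by lia.
  induction (Z.to_nat (m - n - 1)) as [| k IH].
  - apply Ha.
  - specialize (Ha (n + Z.of_nat (S k))%Z).
    replace (n + Z.of_nat (S (S k)))%Z with (n + Z.of_nat (S k) + 1)%Z by lia. lra.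
Qed.

Lemma increasing_seq_le a n m : increasing_seq a -> (n <= m)%Z -> a n <= a m.
Proof.
  intros Ha Hnm. destruct (Z.eq_dec n m) as [-> | Hne]; [lra |].
  left. apply increasing_seq_lt; auto. lia.
Qed.

Lemma increasing_seq_bracket a t :
  increasing_seq a -> unbounded_seq a -> exists n, a n <= t < a (n + 1)%Z.
Proof.
  intros Ha [Htop Hbot].
  assert (walk : forall k n, a n <= t -> t < a (n + Z.of_nat k)%Z ->
                   exists m, a m <= t < a (m + 1)%Z).
  { induction k as [| k IH]; intros n Hn Ht.
    - rewrite Z.add_0_r in Ht. lra.
    - destruct (Rlt_or_le t (a (n + 1)%Z)); [now exists n |].
      apply (IH (n + 1)%Z); auto.
      now replace (n + 1 + Z.of_nat k)%Z with (n + Z.of_nat (S k))%Z by lia. }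
  destruct (Hbot t) as [n0 Hn0]. destruct (Htop t) as [n1 Hn1].
  destruct (Z_lt_le_dec n0 n1) as [L | L].
  - apply (walk (Z.to_nat (n1 - n0)) n0); [lra |].
    now replace (n0 + Z.of_nat (Z.to_nat (n1 - n0)))%Z with n1 by lia.
  - pose proof (increasing_seq_le a n1 n0 Ha L). lra.
Qed.

Lemma unbounded_seq_comp F a :
  increasing_bijection F -> unbounded_seq a -> unbounded_seq (fun n => F (a n)).
Proof.
  intros [HF Hs] [Htop Hbot]. split; intro M; destruct (Hs M) as [y <-].
  - destruct (Htop y) as [n Hn]. exists n. auto.
  - destruct (Hbot y) as [n Hn]. exists n. auto.
Qed.

Lemma unbounded_seq_ext a b : (forall n, a n = b n) -> unbounded_seq a -> unbounded_seq b.
Proof.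
  intros E [Htop Hbot]. split; intro M.
  - destruct (Htop M) as [n Hn]. exists n. now rewrite <- E.
  - destruct (Hbot M) as [n Hn]. exists n. now rewrite <- E.
Qed.

Section Piecewise.

Variables (a : Z -> R) (F : R -> R) (g : Z -> R -> R).
Hypothesis a_incr : increasing_seq a.
Hypothesis a_unbounded : unbounded_seq a.
Hypothesis F_piece : forall n t, a n <= t < a (n + 1)%Z -> F t = g n t.

Lemma piecewise_strict_increasing :
  (forall n, strict_increasing (g n)) ->
  (forall n, g n (a (n + 1)%Z) <= g (n + 1)%Z (a (n + 1)%Z)) ->
  strict_increasing F.
Proof.
  intros g_incr g_glue t s Hts.
  (* [F] maps the [n]-th piece into [[b n, b (n + 1))]. *)
  set (b := fun n => g n (a n)).
  assert (b_incr : increasing_seq b).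
  { intro n. specialize (g_glue n). specialize (g_incr n _ _ (a_incr n)). unfold b. lra. }
  destruct (increasing_seq_bracket a t a_incr a_unbounded) as [n Hn].
  destruct (increasing_seq_bracket a s a_incr a_unbounded) as [m Hm].
  rewrite (F_piece n t Hn), (F_piece m s Hm).
  destruct (Z.lt_trichotomy n m) as [L | [<- | L]].
  - assert (g n t < b (n + 1)%Z).
    { specialize (g_glue n). specialize (g_incr n _ _ (proj2 Hn)). unfold b. lra. }
    pose proof (increasing_seq_le b (n + 1) m b_incr ltac:(lia)).
    pose proof (strict_increasing_le (g m) _ _ (g_incr m) (proj1 Hm)).
    unfold b in *. lra.
  - now apply g_incr.
  - pose proof (increasing_seq_le a (m + 1) n a_incr ltac:(lia)). lra.
Qed.

Lemma piecewise_increasing_bijection :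
  (forall n, increasing_bijection (g n)) ->
  (forall n, g n (a (n + 1)%Z) = g (n + 1)%Z (a (n + 1)%Z)) ->
  unbounded_seq (fun n => g n (a n)) ->
  increasing_bijection F.
Proof.
  intros g_bij g_glue b_unbounded.
  assert (g_incr : forall n, strict_increasing (g n)) by (intro n; apply g_bij).
  split.
  - apply piecewise_strict_increasing; auto. intro n. rewrite g_glue. lra.
  - intro y.
    assert (b_incr : increasing_seq (fun n => g n (a n))).
    { intro n. rewrite <- g_glue. apply g_incr, a_incr. }
    destruct (increasing_seq_bracket _ y b_incr b_unbounded) as [n [Hlo Hhi]].
    rewrite <- g_glue in Hhi.
    destruct (proj2 (g_bij n) y) as [t <-].
    exists t. apply F_piece. split.
    + destruct (Rlt_or_le t (a n)) as [L |]; auto. apply (g_incr n) in L. lra.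
    + now apply (strict_increasing_lt_rev (g n)).
Qed.

End Piecewise.

Lemma ga_map_strict_increasing N P Q : strict_increasing (ga_map N P Q).
Proof.
  intros x y Hxy. unfold ga_map.
  assert (0 < powerRZ 2 N) by (apply powerRZ_lt; lra).
  apply Rplus_lt_compat_r, Rmult_lt_compat_l; auto.
Qed.

Lemma piecewise_ga_increasing_bijection h (a : Z -> R) (N P : Z -> Z) (Q : Z -> nat) :
  homeo h -> increasing_seq a -> unbounded_seq a ->
  (forall n y, a n <= y <= a (n + 1)%Z -> h y = ga_map (N n) (P n) (Q n) y) ->
  increasing_bijection h.
Proof.
  intros [_ [h' [_ [h_h' _]]]] Ha Ha_unbounded h_piece.
  split; [| intro y; now exists (h' y)].
  apply (piecewise_strict_increasing a h (fun n => ga_map (N n) (P n) (Q n)) Ha Ha_unbounded).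
  - intros n t Ht. apply h_piece. lra.
  - intro n. apply ga_map_strict_increasing.
  - intro n. rewrite <- !h_piece; pose proof (Ha n); pose proof (Ha (n + 1)%Z); lra.
Qed.

Lemma pow2_neq0 q : 2 ^ q <> 0.
Proof. apply pow_nonzero; lra. Qed.

Lemma dyadic_IZR k : dyadic (IZR k).
Proof. exists k, 0%nat. simpl. field. Qed.

Lemma dyadic_add x y : dyadic x -> dyadic y -> dyadic (x + y).
Proof.
  intros [a [q ->]] [b [r ->]].
  exists (a * 2 ^ Z.of_nat r + b * 2 ^ Z.of_nat q)%Z, (q + r)%nat.
  rewrite plus_IZR, !mult_IZR, <- !pow_IZR, pow_add. field. split; apply pow2_neq0.
Qed.

Lemma dyadic_mul_pow2 m x : dyadic x -> dyadic (2 ^ m * x).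
Proof.
  intros [p [q ->]]. exists (p * 2 ^ Z.of_nat m)%Z, q.
  rewrite mult_IZR, <- pow_IZR. field. apply pow2_neq0.
Qed.

Lemma dyadic_div_pow2 m x : dyadic x -> dyadic (x / 2 ^ m).
Proof.
  intros [p [q ->]]. exists p, (q + m)%nat.
  rewrite pow_add. field. split; apply pow2_neq0.
Qed.

Lemma dyadic_mul_powerRZ N x : dyadic x -> dyadic (powerRZ 2 N * x).
Proof.
  intro Hx. destruct N as [| k | k]; simpl.
  - now rewrite Rmult_1_l.
  - now apply dyadic_mul_pow2.
  - rewrite Rmult_comm. now apply dyadic_div_pow2.
Qed.

Lemma dyadic_ga_map N P Q x : dyadic x -> dyadic (ga_map N P Q x).
Proof.
  intro Hx. apply dyadic_add; [now apply dyadic_mul_powerRZ |]. now exists P, Q.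
Qed.

Definition dyadic_repr (x : R) : Z * nat :=
  epsilon (inhabits (0%Z, 0%nat)) (fun pq => x = IZR (fst pq) / 2 ^ snd pq).

Section Conjugacy.

Variables (f finv : R -> R).
Hypothesis f_incr : strict_increasing f.
Hypothesis finv_f : forall x, finv (f x) = x.
Hypothesis f_finv : forall y, f (finv y) = y.
Hypothesis f_add1 : forall x, f (x + 1) = f x + 2.
Hypothesis f0 : f 0 = 0.

Lemma f_add_int z x : f (x + IZR z) = f x + 2 * IZR z.
Proof.
  revert x. induction z as [| z IH | z IH] using Z.peano_ind; intro x.
  - rewrite Rplus_0_r. ring.
  - rewrite succ_IZR, <- Rplus_assoc, f_add1, IH. ring.
  - assert (E : IZR z = IZR (Z.pred z) + 1) by (rewrite <- succ_IZR, Z.succ_pred; reflexivity).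
    specialize (IH x). rewrite E, <- Rplus_assoc, f_add1 in IH. lra.
Qed.

Lemma finv_add_int z y : finv (y + 2 * IZR z) = finv y + IZR z.
Proof. rewrite <- (finv_f (finv y + IZR z)), f_add_int, f_finv. reflexivity. Qed.

Lemma iter_finv_add_int q k y :
  Nat.iter q finv (y + IZR k * 2 ^ q) = Nat.iter q finv y + IZR k.
Proof.
  revert k. induction q as [| q IH]; intro k; simpl.
  - ring.
  - replace (y + IZR k * (2 * 2 ^ q)) with (y + IZR (2 * k) * 2 ^ q)
      by (rewrite mult_IZR; ring).
    rewrite IH, mult_IZR. apply finv_add_int.
Qed.

Lemma iter_finv_0 q : Nat.iter q finv 0 = 0.
Proof.
  induction q as [| q IH]; simpl; [reflexivity |].
  rewrite IH, <- f0 at 1. apply finv_f.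
Qed.

Lemma rbar_mul_pow2 p q : rbar finv (p * 2 ^ Z.of_nat q) q = IZR p.
Proof.
  unfold rbar. rewrite mult_IZR, <- pow_IZR, <- (Rplus_0_l (IZR p * _)).
  rewrite iter_finv_add_int, iter_finv_0. ring.
Qed.

Lemma rbar_eq p q p' q' :
  IZR p / 2 ^ q = IZR p' / 2 ^ q' -> rbar finv p q = rbar finv p' q'.
Proof.
  intro E. unfold rbar.
  rewrite <- (rbar_mul_pow2 p q'), <- (rbar_mul_pow2 p' q). unfold rbar.
  rewrite <- !Nat.iter_add, Nat.add_comm. f_equal.
  rewrite !mult_IZR, <- !pow_IZR.
  apply (Rmult_eq_compat_r (2 ^ q * 2 ^ q')) in E.
  pose proof (pow2_neq0 q). pose proof (pow2_neq0 q').
  replace (IZR p * 2 ^ q') with (IZR p / 2 ^ q * (2 ^ q * 2 ^ q')) by (field; auto).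
  replace (IZR p' * 2 ^ q) with (IZR p' / 2 ^ q' * (2 ^ q * 2 ^ q')) by (field; auto).
  exact E.
Qed.

(* The map r |-> bar r of the paper; its values off Q_2 play no role. *)
Definition dbar (x : R) : R := rbar finv (fst (dyadic_repr x)) (snd (dyadic_repr x)).

Lemma dbar_rbar p q : dbar (IZR p / 2 ^ q) = rbar finv p q.
Proof.
  unfold dbar, dyadic_repr.
  match goal with |- context [epsilon ?i ?P] =>
    pose proof (epsilon_spec i P (ex_intro _ (p, q) eq_refl)) as E end.
  symmetry. now apply rbar_eq.
Qed.

Lemma dbar_IZR k : dbar (IZR k) = IZR k.
Proof.
  replace (IZR k) with (IZR k / 2 ^ 0) at 1 by (simpl; field).
  rewrite dbar_rbar. reflexivity.
Qed.

Lemma dbar_add_int x k : dyadic x -> dbar (x + IZR k) = dbar x + IZR k.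
Proof.
  intros [p [q ->]].
  replace (IZR p / 2 ^ q + IZR k) with (IZR (p + k * 2 ^ Z.of_nat q) / 2 ^ q)
    by (rewrite plus_IZR, mult_IZR, <- pow_IZR; field; apply pow2_neq0).
  rewrite !dbar_rbar. unfold rbar.
  rewrite plus_IZR, mult_IZR, <- pow_IZR. apply iter_finv_add_int.
Qed.

Lemma dbar_double x : dyadic x -> dbar (2 * x) = f (dbar x).
Proof.
  intros [p [q ->]].
  replace (2 * (IZR p / 2 ^ q)) with (IZR (2 * p) / 2 ^ q)
    by (rewrite mult_IZR; field; apply pow2_neq0).
  replace (IZR p / 2 ^ q) with (IZR (2 * p) / 2 ^ S q)
    by (rewrite mult_IZR; simpl; field; apply pow2_neq0).
  rewrite !dbar_rbar. unfold rbar. simpl. now rewrite f_finv.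
Qed.

Lemma dbar_half x : dyadic x -> dbar (x / 2) = finv (dbar x).
Proof.
  intros [p [q ->]].
  replace (IZR p / 2 ^ q / 2) with (IZR p / 2 ^ S q) by (simpl; field; apply pow2_neq0).
  rewrite !dbar_rbar. reflexivity.
Qed.

Lemma increasing_bijection_f : increasing_bijection f.
Proof. split; [exact f_incr | intro y; now exists (finv y)]. Qed.

Lemma increasing_bijection_finv : increasing_bijection finv.
Proof.
  split; [| intro x; now exists (f x)].
  intros x y H. apply (strict_increasing_lt_rev f); auto. now rewrite !f_finv.
Qed.

Lemma dbar_lt x y : dyadic x -> dyadic y -> x < y -> dbar x < dbar y.
Proof.
  intros [a [q ->]] [b [r ->]] H.
  pose proof (pow_lt 2 q ltac:(lra)). pose proof (pow_lt 2 r ltac:(lra)).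
  replace (IZR a / 2 ^ q) with (IZR (a * 2 ^ Z.of_nat r) / 2 ^ (q + r))
    by (rewrite mult_IZR, <- pow_IZR, pow_add; field; lra).
  replace (IZR b / 2 ^ r) with (IZR (b * 2 ^ Z.of_nat q) / 2 ^ (q + r))
    by (rewrite mult_IZR, <- pow_IZR, pow_add; field; lra).
  rewrite !dbar_rbar. apply (increasing_bijection_iter finv _ increasing_bijection_finv).
  rewrite !mult_IZR, <- !pow_IZR.
  apply (Rmult_lt_compat_r (2 ^ q * 2 ^ r)) in H; [| apply Rmult_lt_0_compat; auto].
  replace (IZR a / 2 ^ q * (2 ^ q * 2 ^ r)) with (IZR a * 2 ^ r) in H by (field; lra).
  replace (IZR b / 2 ^ r * (2 ^ q * 2 ^ r)) with (IZR b * 2 ^ q) in H by (field; lra).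
  exact H.
Qed.

Lemma iter_f_dbar m x : dyadic x -> Nat.iter m f (dbar x) = dbar (2 ^ m * x).
Proof.
  intro Hx. induction m as [| m IH]; simpl.
  - now rewrite Rmult_1_l.
  - rewrite IH, <- dbar_double, Rmult_assoc; [reflexivity | now apply dyadic_mul_pow2].
Qed.

Lemma iter_finv_dbar m x : dyadic x -> Nat.iter m finv (dbar x) = dbar (x / 2 ^ m).
Proof.
  intro Hx. induction m as [| m IH]; simpl.
  - f_equal. field.
  - rewrite IH, <- dbar_half; [| now apply dyadic_div_pow2].
    f_equal. field. apply pow2_neq0.
Qed.

Lemma fpowZ_dbar N x : dyadic x -> fpowZ f finv N (dbar x) = dbar (powerRZ 2 N * x).
Proof.
  intro Hx. destruct N as [| k | k]; simpl.
  - now rewrite Rmult_1_l.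
  - now apply iter_f_dbar.
  - rewrite Rmult_comm. now apply iter_finv_dbar.
Qed.

Lemma theta_GA_dbar N P Q x :
  dyadic x -> theta_GA f finv N P Q (dbar x) = dbar (ga_map N P Q x).
Proof.
  intro Hx. unfold theta_GA, theta_T, ga_map.
  assert (Hy : dyadic (powerRZ 2 N * x)) by now apply dyadic_mul_powerRZ.
  rewrite fpowZ_dbar, iter_f_dbar, <- dbar_add_int, iter_finv_dbar; auto.
  - f_equal. field. apply pow2_neq0.
  - apply dyadic_add; [now apply dyadic_mul_pow2 | apply dyadic_IZR].
  - now apply dyadic_mul_pow2.
Qed.

Lemma increasing_bijection_theta_GA N P Q : increasing_bijection (theta_GA f finv N P Q).
Proof.
  pose proof increasing_bijection_f. pose proof increasing_bijection_finv.
  unfold theta_GA, theta_T.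
  apply (increasing_bijection_comp (fun t => Nat.iter Q finv (Nat.iter Q f t + IZR P))).
  - apply (increasing_bijection_comp (Nat.iter Q finv)); [now apply increasing_bijection_iter |].
    apply (increasing_bijection_comp (fun t => t + IZR P));
      [apply increasing_bijection_translate | now apply increasing_bijection_iter].
  - destruct N; simpl; [apply increasing_bijection_id | now apply increasing_bijection_iter ..].
Qed.

Lemma dbar_seq_unbounded a :
  (forall n, dyadic (a n)) -> unbounded_seq a -> unbounded_seq (fun n => dbar (a n)).
Proof.
  intros Hd [Htop Hbot]. split; intro M; destruct (archimed M) as [Hup Hup'].
  - destruct (Htop (IZR (up M))) as [n Hn]. exists n.
    pose proof (dbar_lt _ _ (dyadic_IZR (up M)) (Hd n) Hn). rewrite dbar_IZR in *. lra.
  - destruct (Hbot (IZR (up M - 1))) as [n Hn]. exists n.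
    pose proof (dbar_lt _ _ (Hd n) (dyadic_IZR (up M - 1)) Hn).
    rewrite dbar_IZR, minus_IZR in *. lra.
Qed.

End Conjugacy.

Theorem mainTheorem5
  (f finv : R -> R)
  (Hfcont : continuity f)
  (Hfincr : forall x y, x < y -> f x < f y)
  (Hfinv1 : forall x, finv (f x) = x)
  (Hfinv2 : forall y, f (finv y) = y)
  (Hf1 : forall x, f (x + 1) = f x + 2)
  (Hf0 : f 0 = 0)
  (h : R -> R) (Hh : PL2 h)
  (xp : Z -> Z) (xq : Z -> nat)
  (Hxinc : forall n : Z, IZR (xp n) / 2 ^ (xq n) < IZR (xp (n + 1)%Z) / 2 ^ (xq (n + 1)%Z))
  (Hxtop : forall M : R, exists n : Z, M < IZR (xp n) / 2 ^ (xq n))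
  (Hxbot : forall M : R, exists n : Z, IZR (xp n) / 2 ^ (xq n) < M)
  (ga gp : Z -> Z) (gq : Z -> nat)
  (Hgamma : forall (n : Z) (y : R),
      IZR (xp n) / 2 ^ (xq n) <= y <= IZR (xp (n + 1)%Z) / 2 ^ (xq (n + 1)%Z) ->
      h y = ga_map (ga n) (gp n) (gq n) y)
  (th : R -> R)
  (Hth : forall (n : Z) (t : R),
      rbar finv (xp n) (xq n) <= t < rbar finv (xp (n + 1)%Z) (xq (n + 1)%Z) ->
      th t = theta_GA f finv (ga n) (gp n) (gq n) t) :
  homeo th.
Proof.
  set (x := fun n => IZR (xp n) / 2 ^ xq n).
  set (bar := dbar finv).
  assert (x_dyadic : forall n, dyadic (x n)) by (intro n; now exists (xp n), (xq n)).
  assert (x_unbounded : unbounded_seq x) by (split; assumption).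
  assert (h_bij : increasing_bijection h)
    by exact (piecewise_ga_increasing_bijection h x ga gp gq (proj1 Hh) Hxinc x_unbounded Hgamma).
  assert (h_at : forall n m, (m = n \/ m = n + 1)%Z ->
            h (x m) = ga_map (ga n) (gp n) (gq n) (x m)).
  { intros n m [-> | ->]; apply Hgamma; pose proof (Hxinc n); unfold x; lra. }
  assert (theta_at : forall n m, (m = n \/ m = n + 1)%Z ->
            theta_GA f finv (ga n) (gp n) (gq n) (bar (x m)) = bar (h (x m))).
  { intros n m Hm. unfold bar. rewrite theta_GA_dbar, (h_at n m Hm); auto. }
  assert (hx_dyadic : forall n, dyadic (h (x n))).
  { intro n. rewrite (h_at n n); [apply dyadic_ga_map, x_dyadic | now left]. }
  pose proof (dbar_seq_unbounded f finv Hfincr Hfinv1 Hfinv2 Hf1 Hf0 _ hx_dyadic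
                (unbounded_seq_comp h x h_bij x_unbounded)) as barhx_unbounded.
  apply increasing_bijection_homeo.
  apply (piecewise_increasing_bijection (fun n => bar (x n)) th
           (fun n => theta_GA f finv (ga n) (gp n) (gq n))).
  - intro n. apply (dbar_lt f finv); auto. apply Hxinc.
  - exact (dbar_seq_unbounded f finv Hfincr Hfinv1 Hfinv2 Hf1 Hf0 x x_dyadic x_unbounded).
  - intros n t. unfold bar, x. rewrite !(dbar_rbar f finv); auto.
  - intro n. now apply (increasing_bijection_theta_GA f finv).
  - intro n. rewrite !theta_at; auto.
  - apply (unbounded_seq_ext _ _ (fun n => eq_sym (theta_at n n (or_introl eq_refl)))).
    exact barhx_unbounded.
Qed.
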